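(* Let $v_1,\ldots,v_r\in\mathbb{Z}^n$ with $\sum_i v_i=0$ and $\mathbf{a}\in\mathbb{Z}^r$ be such that $P=\bigcap_i\{x:\langle v_i,x\rangle+a_i\ge 0\}$ is compact and each hyperplane $\{\langle v_i,x\rangle+a_i=0\}$ meets $P$. Then for every $x\in L$, \[ \lim_{k\to\infty}\frac{\phi_{k\mathbf{a}}(km_{\mathbf{a}})}{\phi_{k\mathbf{a}}(km_{\mathbf{a}}+\sqrt{k}x)}=e^{-\frac12\sum_{i\in I_{\mathbf{a}}}\frac{\langle v_i,x\rangle^2}{\langle v_i,m_{\mathbf{a}}\rangle+a_i}}. \] Moreover, for every $0<c<\frac16$ there are constants $C>0$ and $K$ such that for all integers $k\ge K$ and all $x\in L$ with $|x|<k^c$, \[ \left|\frac{\phi_{k\mathbf{a}}(km_{\mathbf{a}})}{\phi_{k\mathbf{a}}(km_{\mathbf{a}}+\sqrt{k}x)}\sqrt{\prod_{i\in I_{\mathbf{a}}}\frac{\langle v_i,km_{\mathbf{a}}\rangle+ka_i}{\langle v_i,km_{\mathbf{a}}+\sqrt{k}x\rangle+ka_i}}-e^{-\frac12\sum_{i\in I_{\mathbf{a}}}\frac{\langle v_i,x\rangle^2}{\langle v_i,m_{\mathbf{a}}\rangle+a_i}}\right|\le C\,e^{-\frac12\sum_{i\in I_{\mathbf{a}}}\frac{\langle v_i,x\rangle^2}{\langle v_i,m_{\mathbf{a}}\rangle+a_i}}\,k^{3c-\frac12}. \]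
   Context: $L$ is the linear subspace of $\mathbb{R}^n$ spanned by all differences of points of $P$. $I_{\mathbf{a}}$ is the set of indices $i$ such that $\langle v_i,\cdot\rangle$ is not constant on $P$. For an integer $k\ge1$, $\phi_{k\mathbf{a}}$ is defined on $kP$ by $\phi_{k\mathbf{a}}(y)=\prod_{i=1}^r(\langle v_i,y\rangle+ka_i)^{\langle v_i,y\rangle+ka_i}$ with $0^0=1$; $\phi_{\mathbf{a}}$ is the case $k=1$. $m_{\mathbf{a}}$ is the unique minimizer of $\phi_{\mathbf{a}}$ on $P$; it lies in the relative interior of $P$, so $\langle v_i,m_{\mathbf{a}}\rangle+a_i>0$ for $i\in I_{\mathbf{a}}$, and for fixed $x\in L$ the point $km_{\mathbf{a}}+\sqrt{k}x$ lies in $kP$ for all sufficiently large $k$. *)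

From HB Require Import structures.
From mathcomp Require Import all_boot all_order all_algebra.
From mathcomp Require Import all_classical all_reals all_analysis.
Set Implicit Arguments. Unset Strict Implicit. Unset Printing Implicit Defensive.
Import Order.TTheory GRing.Theory Num.Theory.
Import numFieldNormedType.Exports.
Local Open Scope classical_set_scope.
Local Open Scope ring_scope.

Section Defs.
Variables (R : realType) (n r : nat).

Definition ip (v : 'I_n -> int) (x : 'rV[R]_n) : R :=
  \sum_(j < n) (v j)%:~R * x ord0 j.

Definition polP (v : 'I_r -> 'I_n -> int) (a : 'I_r -> int) : set 'rV[R]_n :=
  [set x | forall i, 0 <= ip (v i) x + (a i)%:~R].

Definition spanDiff (S : set 'rV[R]_n) : set 'rV[R]_n :=
  [set x | exists s : seq (R * ('rV[R]_n * 'rV[R]_n)),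
     (forall t, t \in s -> S t.2.1 /\ S t.2.2) /\
     x = \sum_(t <- s) t.1 *: (t.2.1 - t.2.2)].

Definition nonconst (v : 'I_r -> 'I_n -> int) (a : 'I_r -> int) (i : 'I_r) : Prop :=
  exists p q, polP v a p /\ polP v a q /\ ip (v i) p <> ip (v i) q.

(* phi_{k a}(y) = prod_i (<v_i,y> + k a_i)^(<v_i,y> + k a_i), with 0^0 = 1 *)
Definition phik (v : 'I_r -> 'I_n -> int) (a : 'I_r -> int) (k : nat)
  (y : 'rV[R]_n) : R :=
  \prod_(i < r) (let t := ip (v i) y + k%:R * (a i)%:~R in t `^ t).

Definition enorm (x : 'rV[R]_n) : R := Num.sqrt (\sum_(j < n) x ord0 j ^+ 2).

End Defs.
Arguments nonconst R {n r} v a i.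

(* Write s_i = <v_i, m> + a_i and u_i = <v_i, x>; for i outside I_a both vanish
   (P meets the i-th facet and x lies in L).  The i-th slack at k m + sqrt k x is
   k s_i + sqrt k u_i, so expanding t ln t to second order at k s_i, the log of
   the ratio is
     - sqrt k sum_i u_i (ln (k s_i) + 1) - 1/2 sum_i u_i^2 / s_i + O(|u|^3 / sqrt k).
   The first sum vanishes: sum_i u_i = 0 because the v_i sum to 0, and
   sum_i u_i ln s_i = 0 is the first-order condition for m minimizing
   sum_i xlnx (slack) along x, which applies because m is in the relative
   interior (s_i > 0 on I_a, since t ln t has slope -oo at 0).  The square-root
   factor is exp O(|u| / sqrt k); for |x| < k^c both errors are O(k^(3c - 1/2)). *)

From HB Require Import structures.
From mathcomp Require Import all_boot all_order all_algebra.
From mathcomp Require Import all_classical all_reals all_analysis.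
From mathcomp Require Import ring lra.
Import Order.TTheory GRing.Theory Num.Theory.
Import numFieldNormedType.Exports.
Local Open Scope classical_set_scope.
Local Open Scope ring_scope.

Section XlnX.
Context {R : realType}.
Implicit Types (c d h l s t w : R).

Definition xlnx t := t * ln t.

Lemma powRxx t : t `^ t = expR (xlnx t).
Proof. by rewrite /powR /xlnx; case: eqP => [->|_]; rewrite ?mul0r ?expR0. Qed.

Lemma xlnx0 : xlnx 0 = 0.
Proof. by rewrite /xlnx mul0r. Qed.

Lemma ln_le_sub1 {t} : 0 < t -> ln t <= t - 1.
Proof. by move=> t0; have := @le_ln1Dx R (t - 1); rewrite [1 + _]addrC subrK; apply; lra. Qed.

Lemma ln_ge_1subV {t} : 0 < t -> 1 - t^-1 <= ln t.
Proof.
move=> t0; have := @ln_le_sub1 t^-1; rewrite invr_gt0 lnV ?posrE // => /(_ t0).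
lra.
Qed.

Lemma xlnx_tangent {w t} : 0 < w -> 0 <= t ->
  xlnx w + (t - w) * (ln w + 1) <= xlnx t.
Proof.
move=> w0; rewrite le_eqVlt => /orP[/eqP<-|t0]; first by rewrite xlnx0 /xlnx; nra.
have := ln_ge_1subV (divr_gt0 t0 w0); rewrite ln_div ?posrE // invf_div => h.
have : t * (1 - w / t) <= t * (ln t - ln w) by rewrite ler_pM2l.
rewrite mulrBr mulr1 mulrCA divff ?gt_eqF // mulr1 /xlnx; nra.
Qed.

Lemma xlnx_le_quadratic {s h} : 0 < s -> 0 < s + h ->
  xlnx (s + h) <= xlnx s + h * (ln s + 1) + h ^+ 2 / s.
Proof.
move=> s0 sh0; have := ln_le_sub1 (divr_gt0 sh0 s0); rewrite ln_div ?posrE // => e.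
have : (s + h) * (ln (s + h) - ln s) <= (s + h) * ((s + h) / s - 1) by rewrite ler_pM2l.
have -> : (s + h) * ((s + h) / s - 1) = h + h ^+ 2 / s by field; rewrite gt_eqF.
rewrite /xlnx; nra.
Qed.

Lemma convex_xlnx s d l : 0 <= s -> 0 <= d -> 0 < l < 1 ->
  xlnx ((1 - l) * s + l * d) <= (1 - l) * xlnx s + l * xlnx d.
Proof.
move=> s0 d0 /andP[l0 l1].
have [|w0] := ltP 0 ((1 - l) * s + l * d); last first.
  have [-> ->] : s = 0 /\ d = 0 by split; nra.
  by rewrite !mulr0 addr0 xlnx0 !mulr0 addr0.
set w := _ + _ => w0.
have -> : xlnx w = (1 - l) * (xlnx w + (s - w) * (ln w + 1))
                 + l * (xlnx w + (d - w) * (ln w + 1)) by rewrite /w; ring.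
by apply: lerD; apply: ler_wpM2l; rewrite ?xlnx_tangent //; lra.
Qed.

Definition xlnx_rem2 w := xlnx w - (w - 1) - (w - 1) ^+ 2 / 2.

Lemma xlnx_rem2_1 : xlnx_rem2 1 = 0.
Proof. by rewrite /xlnx_rem2 /xlnx ln1; ring. Qed.

Lemma is_derive_xlnx_rem2 {w} : 0 < w -> is_derive w 1 xlnx_rem2 (ln w - (w - 1)).
Proof.
move=> w0; have ln_w := is_derive1_ln w0; rewrite /xlnx_rem2 /xlnx.
apply: is_derive_eq; rewrite /GRing.scale /= mulr1 mulfV ?gt_eqF //; by field.
Qed.

Lemma xlnx_rem2_MVT {s t} : 0 < s -> s <= t ->
  exists2 c, s <= c <= t & xlnx_rem2 t - xlnx_rem2 s = (ln c - (c - 1)) * (t - s).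
Proof.
move=> s0 st; have [||c] := @MVT_segment R xlnx_rem2 (fun c => ln c - (c - 1)) s t st.
- by move=> y; rewrite in_itv /= => /andP[sy _]; apply: is_derive_xlnx_rem2; lra.
- apply: derivable_within_continuous => y; rewrite in_itv /= => /andP[sy _].
  have y0 : 0 < y by lra.
  by case: (is_derive_xlnx_rem2 y0).
- by rewrite in_itv /= => hc e; exists c.
Qed.

Lemma ln_sub1_le {c} : 2^-1 <= c -> `|ln c - (c - 1)| <= 2 * (c - 1) ^+ 2.
Proof.
move=> c2; have c0 : 0 < c by lra.
have up := ln_le_sub1 c0; have low := ln_ge_1subV c0.
have gap : c - 1 - (1 - c^-1) = (c - 1) ^+ 2 / c by field; rewrite gt_eqF.
have : (c - 1) ^+ 2 / c <= 2 * (c - 1) ^+ 2.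
  by rewrite ler_pdivrMr //; have := sqr_ge0 (c - 1); nra.
by rewrite ler0_norm; lra.
Qed.

Lemma xlnx_rem2_le {w} : 2^-1 <= w -> `|xlnx_rem2 w| <= 2 * `|w - 1| ^+ 3.
Proof.
move=> w2; have [c [c2 cw ->]] : exists c, [/\ 2^-1 <= c, (c - 1) ^+ 2 <= (w - 1) ^+ 2
    & xlnx_rem2 w = (ln c - (c - 1)) * (w - 1)].
  have [w1|w1] := leP 1 w.
    have [c /andP[c1 cw] e] := xlnx_rem2_MVT ltr01 w1.
    by exists c; split; [lra | nra | rewrite -[LHS]subr0 -xlnx_rem2_1 e].
  have [|c /andP[wc c1] e] := xlnx_rem2_MVT _ (ltW w1); first lra.
  exists c; split; [lra | nra |].
  by move: e; rewrite xlnx_rem2_1 sub0r => /(congr1 -%R); rewrite opprK => ->; ring.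
rewrite normrM exprSr mulrA ler_wpM2r // real_normK ?num_real //.
by have := ln_sub1_le c2; lra.
Qed.

End XlnX.

Section NearOne.
Context {R : realType}.
Implicit Types (d e h t y z : R).

Lemma expR_sub1_le {z} : `|z| <= 2^-1 -> `|expR z - 1| <= 2 * `|z|.
Proof.
rewrite ler_norml => /andP[z1 z2].
have := expR_ge1Dx z; have := expR_ge1Dx (- z).
have : expR z * expR (- z) = 1 by rewrite -expRD subrr expR0.
have := expR_gt0 z.
have [z0|z0] := leP 0 z; [rewrite (ger0_norm z0) | rewrite (ltr0_norm z0)];
  move=> e0 e1 h1 h2; rewrite ler_norml; apply/andP; split; nra.
Qed.

Lemma ln1D_le {y} : `|y| <= 2^-1 -> `|ln (1 + y)| <= 2 * `|y|.
Proof.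
rewrite ler_norml => /andP[y1 y2]; have y0 : 0 < 1 + y by lra.
have := ln_le_sub1 y0; have := ln_ge_1subV y0.
have : (1 + y)^-1 * (1 + y) = 1 by rewrite mulVf ?gt_eqF.
have : 0 < (1 + y)^-1 by rewrite invr_gt0.
have [z0|z0] := leP 0 y; [rewrite (ger0_norm z0) | rewrite (ltr0_norm z0)];
  move=> q0 hq h1 h2; rewrite ler_norml; apply/andP; split; nra.
Qed.

Lemma xlnx_shift t h : 0 < t -> 0 < t + h ->
  xlnx t - xlnx (t + h) =
  - (h * (ln t + 1)) - h ^+ 2 / (2 * t) - t * xlnx_rem2 (1 + h / t).
Proof.
move=> t0 th0; have w0 : 0 < 1 + h / t.
  by rewrite -(divff (lt0r_neq0 t0)) -mulrDl divr_gt0.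
have -> : t + h = t * (1 + h / t) by field; rewrite gt_eqF.
by rewrite /xlnx_rem2 /xlnx lnM ?posrE //; field; rewrite gt_eqF.
Qed.

Lemma sqrt_expR z : Num.sqrt (expR z) = expR (z / 2).
Proof.
have -> : expR z = expR (z / 2) ^+ 2 by rewrite expr2 -expRD; congr expR; field.
by rewrite sqrtr_sqr gtr0_norm ?expR_gt0.
Qed.

Lemma mul_expR_dist_le e z d : 0 <= e -> d <= 4^-1 -> `|z| <= 2 * d ->
  `|e * expR z - e| <= 4 * e * d.
Proof.
move=> e0 d4 zd; have -> : e * expR z - e = e * (expR z - 1) by ring.
rewrite normrM (ger0_norm e0) -mulrA mulrCA ler_wpM2l //.
have := @expR_sub1_le z; lra.
Qed.

End NearOne.

(* Here s i, u i and rho stand for <v_i, m> + a_i, <v_i, x> and sqrt k, so that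
   rho^2 s i + rho u i is the i-th slack at k m + sqrt k x. *)
Section ShiftedEntropy.
Context {R : realType} {r : nat} {P : pred 'I_r} {s u : 'I_r -> R}.
Hypothesis s_gt0 : forall {i}, P i -> 0 < s i.
Hypothesis su_eq0 : forall i, ~~ P i -> s i = 0 /\ u i = 0.
Hypothesis sum_u : \sum_i u i = 0.
Hypothesis sum_u_lns : \sum_i u i * ln (s i) = 0.
Context {rho : R}.
Hypothesis rho_gt0 : 0 < rho.

Let D := \sum_(i < r | P i) (`|u i| ^+ 3 / s i ^+ 2 + `|u i| / s i).
Hypothesis D_small : D / rho <= 4^-1.
Let E := expR (- 2^-1 * \sum_(i < r | P i) (u i ^+ 2 / s i)).
Let y i := u i / (rho * s i).
Let cubic i := `|u i| ^+ 3 / s i ^+ 2 / rho.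
Let err i := cubic i + `|y i|.

Let cubic_ge0 {i} : P i -> 0 <= cubic i.
Proof. by move=> Pi; rewrite !divr_ge0 ?sqr_ge0 ?exprn_ge0 // ltW. Qed.

Let norm_y {i} : P i -> `|y i| = `|u i| / s i / rho.
Proof.
move=> Pi; have s0 := s_gt0 Pi.
rewrite /y normrM normfV [`|rho * _|]gtr0_norm ?mulr_gt0 //.
by field; rewrite !gt_eqF.
Qed.

Let sum_err : \sum_(i < r | P i) err i = D / rho.
Proof. by rewrite /D mulr_suml; apply: eq_bigr => i Pi; rewrite /err norm_y // mulrDl. Qed.

Let norm_sum_le (f : 'I_r -> R) : (forall i, P i -> `|f i| <= 2 * err i) ->
  `|\sum_(i < r | P i) f i| <= 2 * (D / rho).
Proof.
move=> hf; rewrite -sum_err mulr_sumr.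
by apply: le_trans (ler_norm_sum _ _ _) _; apply: ler_sum.
Qed.

Let y_small {i} : P i -> `|y i| <= 4^-1.
Proof.
move=> Pi; apply: le_trans D_small; rewrite -sum_err (bigD1 i) //=.
have : 0 <= \sum_(j < r | P j && (j != i)) err j.
  by apply: sumr_ge0 => j /andP[Pj _]; rewrite addr_ge0 ?cubic_ge0.
by have := cubic_ge0 Pi; rewrite /err; lra.
Qed.

Let one_add_y_gt0 {i} : P i -> 0 < 1 + y i.
Proof. by move=> /y_small; rewrite ler_norml => /andP[? _]; lra. Qed.

Lemma sum_xlnx_shift :
  \sum_i xlnx (rho ^+ 2 * s i) - \sum_i xlnx (rho ^+ 2 * s i + rho * u i) =
  - 2^-1 * \sum_(i < r | P i) (u i ^+ 2 / s i)
  - \sum_(i < r | P i) (rho ^+ 2 * s i * xlnx_rem2 (1 + y i)).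
Proof.
have term i : xlnx (rho ^+ 2 * s i) - xlnx (rho ^+ 2 * s i + rho * u i) =
    - (rho * (ln (rho ^+ 2) + 1)) * u i - rho * (u i * ln (s i))
    - (if P i then 2^-1 * (u i ^+ 2 / s i) + rho ^+ 2 * s i * xlnx_rem2 (1 + y i)
       else 0).
  case: ifPn => [Pi|/su_eq0 [-> ->]]; last by rewrite !(mulr0, mul0r, addr0) xlnx0; ring.
  have s0 := s_gt0 Pi; have r20 : 0 < rho ^+ 2 by rewrite exprn_gt0.
  have hy : rho * u i / (rho ^+ 2 * s i) = y i by rewrite /y; field; rewrite !gt_eqF.
  have shift : rho ^+ 2 * s i + rho * u i = rho ^+ 2 * s i * (1 + y i).
    by rewrite -hy; field; rewrite !gt_eqF.
  rewrite xlnx_shift ?shift ?mulr_gt0 ?one_add_y_gt0 // hy lnM ?posrE //.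
  by field; rewrite !gt_eqF.
rewrite -sumrB (eq_bigr _ (fun i _ => term i)) !sumrB -!mulr_sumr sum_u sum_u_lns.
by rewrite -big_mkcond big_split /= -mulr_sumr; ring.
Qed.

Let rem_le {i} : P i -> `|rho ^+ 2 * s i * xlnx_rem2 (1 + y i)| <= 2 * cubic i.
Proof.
move=> Pi; have s0 := s_gt0 Pi; have c0 : 0 <= rho ^+ 2 * s i by rewrite ltW ?mulr_gt0.
have w2 : 2^-1 <= 1 + y i by have := y_small Pi; rewrite ler_norml; lra.
rewrite normrM (ger0_norm c0); apply: le_trans (ler_wpM2l c0 (xlnx_rem2_le w2)) _.
rewrite addrC addKr norm_y //.
suff -> : rho ^+ 2 * s i * (2 * (`|u i| / s i / rho) ^+ 3) = 2 * cubic i by [].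
by rewrite /cubic; field; rewrite !gt_eqF.
Qed.

Let ln_le {i} : P i -> `|ln (1 + y i) / 2| <= `|y i|.
Proof.
move=> Pi; have hy : `|y i| <= 2^-1 by have := y_small Pi; lra.
rewrite normrM (ger0_norm (x := 2^-1)) //.
by have := ln1D_le hy; lra.
Qed.

Let prod_shift : \prod_(i < r | P i) (rho ^+ 2 * s i / (rho ^+ 2 * s i + rho * u i)) =
  expR (- \sum_(i < r | P i) ln (1 + y i)).
Proof.
rewrite -sumrN expR_sum; apply: eq_bigr => i Pi.
have s0 := s_gt0 Pi; have y0 := one_add_y_gt0 Pi.
have rsu : rho * s i + u i = rho * s i * (1 + y i) by rewrite /y; field; rewrite !gt_eqF.
have rsu0 : 0 < rho * s i + u i by rewrite rsu !mulr_gt0.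
rewrite expRN lnK ?posrE // /y; field.
rewrite (_ : _ + rho * u i = rho * (rho * s i + u i)); last by ring.
by rewrite !gt_eqF // mulr_gt0.
Qed.

Let ratio := expR (\sum_i xlnx (rho ^+ 2 * s i)) /
             expR (\sum_i xlnx (rho ^+ 2 * s i + rho * u i)).

Let ratioE : ratio = E * expR (- \sum_(i < r | P i) (rho ^+ 2 * s i * xlnx_rem2 (1 + y i))).
Proof. by rewrite /ratio -expRB sum_xlnx_shift expRD. Qed.

Lemma ratio_dist_le : `|ratio - E| <= 4 * E * (D / rho).
Proof.
rewrite ratioE; apply: mul_expR_dist_le => //; first exact/ltW/expR_gt0.
rewrite normrN; apply: norm_sum_le => i Pi; rewrite /err.
by have := rem_le Pi; have := normr_ge0 (y i); lra.
Qed.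

Lemma ratio_sqrt_prod_dist_le :
  `|ratio * Num.sqrt (\prod_(i < r | P i) (rho ^+ 2 * s i / (rho ^+ 2 * s i + rho * u i)))
    - E| <= 4 * E * (D / rho).
Proof.
rewrite prod_shift sqrt_expR ratioE -mulrA -expRD.
have -> : - \sum_(i < r | P i) (rho ^+ 2 * s i * xlnx_rem2 (1 + y i))
    + (- \sum_(i < r | P i) ln (1 + y i)) / 2
  = - \sum_(i < r | P i) (rho ^+ 2 * s i * xlnx_rem2 (1 + y i) + ln (1 + y i) / 2).
  by rewrite big_split /= -mulr_suml; ring.
apply: mul_expR_dist_le => //; first exact/ltW/expR_gt0.
rewrite normrN; apply: norm_sum_le => i Pi; apply: le_trans (ler_normD _ _) _.
by have := rem_le Pi; have := ln_le Pi; have := normr_ge0 (y i); rewrite /err; lra.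
Qed.

End ShiftedEntropy.

Lemma quadratic_ge0_linear_eq0 {R : realType} (mu G H : R) : 0 < mu ->
  (forall l, `|l| <= mu -> 0 <= l * G + l ^+ 2 * H) -> G = 0.
Proof.
move=> mu0 hq; have [//|G0] := eqVneq G 0; exfalso.
have G0' : 0 < `|G| by rewrite normr_gt0.
set l := mu * `|G| / (`|G| + mu * `|H|).
have den0 : 0 < `|G| + mu * `|H| by have := normr_ge0 H; nra.
have l0 : 0 < l by rewrite divr_gt0 ?mulr_gt0.
have lmu : l <= mu by rewrite ler_pdivrMr // ler_pM2l //; have := normr_ge0 H; nra.
have lH : l * `|H| < `|G|.
  by rewrite /l mulrAC ltr_pdivrMr //; have := normr_ge0 H; nra.
have := hq l; have := hq (- l); rewrite !normrN gtr0_norm // sqrrN.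
move=> /(_ lmu) hm /(_ lmu) hp.
have : `|G| <= l * H by case: (ger0P G) => hG; nra.
have := ler_norm H; nra.
Qed.

Section InnerProduct.
Context {R : realType} {n : nat}.
Implicit Types (x y : 'rV[R]_n) (w : 'I_n -> int).

Lemma ipD w x y : ip w (x + y) = ip w x + ip w y.
Proof. by rewrite /ip -big_split /=; apply: eq_bigr => j _; rewrite mxE mulrDr. Qed.

Lemma ipZ w (c : R) x : ip w (c *: x) = c * ip w x.
Proof. by rewrite /ip mulr_sumr; apply: eq_bigr => j _; rewrite mxE mulrCA. Qed.

Lemma ipB w x y : ip w (x - y) = ip w x - ip w y.
Proof. by rewrite ipD -scaleN1r ipZ mulN1r. Qed.

Lemma ip_sum w (s : seq (R * ('rV[R]_n * 'rV[R]_n))) :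
  ip w (\sum_(t <- s) t.1 *: (t.2.1 - t.2.2)) =
  \sum_(t <- s) t.1 * (ip w t.2.1 - ip w t.2.2).
Proof.
elim: s => [|t s IH]; last by rewrite !big_cons ipD ipZ ipB IH.
by rewrite !big_nil /ip big1 // => j _; rewrite mxE mulr0.
Qed.

Lemma normr_coord_le_enorm x j : `|x ord0 j| <= enorm x.
Proof.
rewrite /enorm -sqrtr_sqr ler_sqrt; last by apply: sumr_ge0 => i _; rewrite sqr_ge0.
by rewrite (bigD1 j) //= lerDl; apply: sumr_ge0 => i _; rewrite sqr_ge0.
Qed.

Lemma normr_ip_le w x : `|ip w x| <= (\sum_j `|(w j)%:~R : R|) * enorm x.
Proof.
rewrite /ip mulr_suml; apply: le_trans (ler_norm_sum _ _ _) _.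
by apply: ler_sum => j _; rewrite normrM ler_wpM2l ?normr_coord_le_enorm.
Qed.

End InnerProduct.

Lemma near_powRN_le {R : realType} (al eps : R) : 0 < al -> 0 < eps ->
  \forall k \near \oo, (k%:R : R) `^ (- al) <= eps.
Proof.
move=> al0 eps0; set b := eps `^ (- al^-1).
have b0 : 0 < b by exact: powR_gt0.
near=> k; have kb : b <= k%:R by near: k; exact: nbhs_infty_ger.
have k0 : 0 < k%:R :> R by exact: lt_le_trans kb.
rewrite powRN -[leRHS]invrK lef_pV2 ?posrE ?powR_gt0 ?invr_gt0 //.
have -> : eps^-1 = b `^ al by rewrite -powRrM mulNr mulVf ?gt_eqF // powR_inv1 ?ltW.
by apply: ge0_ler_powR; rewrite ?nnegrE ?(ltW al0) ?(ltW b0) ?(ltW k0).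
Unshelve. all: by end_near.
Qed.

Lemma powR_natmul_sub_half {R : realType} (t c : R) (j : nat) : 0 < t ->
  t `^ (j%:R * c - 2%:R^-1) = (t `^ c) ^+ j / Num.sqrt t.
Proof.
move=> t0; rewrite powRD; last by apply/implyP => _; rewrite gt_eqF.
rewrite powRN powR12_sqrt ?ltW //.
by congr (_ / _); rewrite -powR_mulrn ?powR_ge0 // -powRrM mulrC.
Qed.

Section Polytope.
Context {R : realType} {n r : nat} (v : 'I_r -> 'I_n -> int) (a : 'I_r -> int).
Implicit Types (p q x y : 'rV[R]_n).
Local Notation P := (polP v a).
Local Notation nonconst := (nonconst R v a).

Definition slack x i := ip (v i) x + (a i)%:~R.

Definition logphi x := \sum_i xlnx (slack x i).

Lemma slackD x y i : slack (x + y) i = slack x i + ip (v i) y.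
Proof. by rewrite /slack ipD; ring. Qed.

Lemma phikE k y : phik v a k y = expR (\sum_i xlnx (ip (v i) y + k%:R * (a i)%:~R)).
Proof. by rewrite /phik expR_sum; apply: eq_bigr => i _; exact: powRxx. Qed.

Lemma phik1E y : phik v a 1 y = expR (logphi y).
Proof. by rewrite phikE; congr expR; apply: eq_bigr => i _; rewrite mul1r. Qed.

Lemma ip_const_on_P {i p q} : ~ nonconst i -> P p -> P q -> ip (v i) p = ip (v i) q.
Proof. by move=> nc pP qP; apply: contra_notP nc => neq; exists p, q. Qed.

Lemma ip_spanDiff_eq0 {i x} : ~ nonconst i -> spanDiff P x -> ip (v i) x = 0.
Proof.
move=> nc [s [hs ->]]; rewrite ip_sum big_seq big1 // => t /hs [h1 h2].
by rewrite (ip_const_on_P nc h1 h2) subrr mulr0.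
Qed.

Lemma nonconst_slack_gt0 {i} : nonconst i -> exists2 p, P p & 0 < slack p i.
Proof.
move=> [p [q [pP [qP neq]]]].
have [hp|hp] := ltP 0 (slack p i); first by exists p.
exists q => //; rewrite lt_def /slack (qP i) andbT; apply/eqP => q0; apply: neq.
have p0 : slack p i = 0 by apply/le_anti; rewrite hp (pP i).
by apply: (addIr (a i)%:~R); rewrite -/(slack p i) p0 q0.
Qed.

Lemma slack_segment p q l j :
  slack ((1 - l) *: p + l *: q) j = (1 - l) * slack p j + l * slack q j.
Proof. by rewrite /slack ipD !ipZ; ring. Qed.

Lemma convex_polP {p q l} : P p -> P q -> 0 <= l <= 1 -> P ((1 - l) *: p + l *: q).
Proof.
move=> pP qP /andP[l0 l1] j; rewrite -/(slack _ j) slack_segment.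
by rewrite addr_ge0 ?mulr_ge0 ?subr_ge0 ?(pP j) ?(qP j).
Qed.

Lemma sum_ip_eq0 : (forall j, \sum_i v i j = 0) -> forall x, \sum_i ip (v i) x = 0.
Proof.
move=> hsum x; rewrite /ip exchange_big /= big1 // => j _.
by rewrite -mulr_suml -mulrz_sumr hsum mul0r.
Qed.

Section Minimizer.
Variable m : 'rV[R]_n.
Hypothesis m_in : P m.
Hypothesis m_min : forall y, P y -> phik v a 1 m <= phik v a 1 y.

Lemma logphi_min {y} : P y -> logphi m <= logphi y.
Proof. by move=> /m_min; rewrite !phik1E ler_expR. Qed.

Lemma logphi_segment_le {p i l} : P p -> slack m i = 0 -> 0 < l < 1 ->
  logphi ((1 - l) *: m + l *: p) <=
  (1 - l) * logphi m + l * logphi p + l * slack p i * ln l.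
Proof.
move=> pP mi0 /andP[l0 l1].
have term j : xlnx (slack ((1 - l) *: m + l *: p) j) <=
    (1 - l) * xlnx (slack m j) + l * xlnx (slack p j)
    + (if j == i then l * slack p i * ln l else 0).
  rewrite slack_segment; case: eqP => [->|_]; last first.
    by rewrite addr0 convex_xlnx ?m_in ?pP ?l0.
  rewrite mi0 mulr0 add0r xlnx0 mulr0 add0r.
  have [->|d0] := eqVneq (slack p i) 0; first by rewrite !(mulr0, mul0r, xlnx0, addr0).
  have {}d0 : 0 < slack p i by rewrite lt_def d0 (pP i).
  by rewrite /xlnx lnM ?posrE //; lra.
apply: le_trans (ler_sum _ (fun j _ => term j)) _.
by rewrite !big_split /= -big_mkcond big_pred1_eq -!mulr_sumr.
Qed.

(* The derivative of xlnx is -oo at 0: if the i-th slack vanished at m, moving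
   from m a step l = exp(-K/d) towards a point p of i-th slack d > 0 would gain
   l * d * ln l = - l * K, more than convexity can lose. *)
Lemma slack_gt0 {i} : nonconst i -> 0 < slack m i.
Proof.
move=> nci; rewrite lt_def (m_in i) andbT; apply/eqP => mi0.
have [p pP d0] := nonconst_slack_gt0 nci; set d := slack p i in d0.
set K := `|logphi m| + `|logphi p| + 1.
have K0 : 0 < K by rewrite /K; have := normr_ge0 (logphi m); have := normr_ge0 (logphi p); lra.
set l := expR (- K / d).
have l01 : 0 < l < 1 by rewrite expR_gt0 expR_lt1 mulNr oppr_lt0 divr_gt0.
have dlnl : d * ln l = - K by rewrite expRK; field; rewrite gt_eqF.
have /andP[l0 l1] := l01; have l01' : 0 <= l <= 1 by rewrite !ltW.
have hmin := logphi_min (convex_polP m_in pP l01').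
have := logphi_segment_le pP mi0 l01; rewrite -/d -mulrA dlnl => hseg.
have : l * (logphi m - logphi p + K) <= 0 by nra.
rewrite pmulr_rle0 //; have := ler_norm (logphi p); have := lerNnormlW (lexx `|logphi m|).
rewrite /K; lra.
Qed.

Hypothesis faces : forall i, exists y, P y /\ slack y i = 0.

Lemma slack_eq0 {i} : ~ nonconst i -> slack m i = 0.
Proof. by move=> nc; have [y [yP y0]] := faces i; rewrite /slack (ip_const_on_P nc m_in yP). Qed.

Lemma line_slack_gt0 x : exists2 mu, 0 < mu &
  forall l, `|l| <= mu -> forall j, nonconst j -> 0 < slack (m + l *: x) j.
Proof.
set S := \sum_(j < r | `[< nonconst j >]) `|ip (v j) x| / slack m j.
have S0 : 0 <= S.
  by apply: sumr_ge0 => j /asboolP nj; rewrite divr_ge0 // ltW ?slack_gt0.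
exists (1 + S)^-1 => [|l hl j nj]; first by rewrite invr_gt0; lra.
have s0 := slack_gt0 nj; rewrite slackD ipZ.
have hu : `|ip (v j) x| <= S * slack m j.
  rewrite -ler_pdivrMr // /S (bigD1 j) /=; last exact/asboolP.
  rewrite lerDl; apply: sumr_ge0 => k /andP[/asboolP nk _].
  by rewrite divr_ge0 // ltW ?slack_gt0.
have hl' : `|l * ip (v j) x| <= `|ip (v j) x| / (1 + S) by rewrite normrM mulrC ler_wpM2l.
have : `|ip (v j) x| / (1 + S) < slack m j by rewrite ltr_pdivrMr ?mulrDr ?mulr1; lra.
have := lerNnormlW (lexx `|l * ip (v j) x|); lra.
Qed.

Hypothesis v_sum0 : forall j, \sum_i v i j = 0.

Lemma logphi_line_le {x l} : spanDiff P x ->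
    (forall j, nonconst j -> 0 < slack (m + l *: x) j) ->
  logphi (m + l *: x) <= logphi m + l * \sum_i ip (v i) x * ln (slack m i)
                                 + l ^+ 2 * \sum_i ip (v i) x ^+ 2 / slack m i.
Proof.
move=> xL hpos.
have term j : xlnx (slack (m + l *: x) j) <= xlnx (slack m j)
    + l * (ip (v j) x * ln (slack m j)) + l * ip (v j) x
    + l ^+ 2 * (ip (v j) x ^+ 2 / slack m j).
  have := hpos j; rewrite slackD ipZ.
  case: (pselect (nonconst j)) => [nj /(_ nj) pos|nj _]; last first.
    by rewrite slack_eq0 // (ip_spanDiff_eq0 nj xL) !(mulr0, addr0, expr0n, mul0r).
  have := xlnx_le_quadratic (slack_gt0 nj) pos.
  by rewrite exprMn -mulrA; lra.
apply: le_trans (ler_sum _ (fun j _ => term j)) _.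
by rewrite !big_split /= -!mulr_sumr (sum_ip_eq0 v_sum0) mulr0 addr0.
Qed.

Lemma sum_ip_ln_slack_eq0 {x} : spanDiff P x -> \sum_i ip (v i) x * ln (slack m i) = 0.
Proof.
move=> xL; have [mu mu0 hmu] := line_slack_gt0 x.
apply: (@quadratic_ge0_linear_eq0 _ mu _ (\sum_i ip (v i) x ^+ 2 / slack m i) mu0).
move=> l /hmu hpos.
have inP : P (m + l *: x).
  move=> j; rewrite -/(slack _ j); case: (pselect (nonconst j)) => nj.
    exact/ltW/hpos.
  by rewrite slackD ipZ slack_eq0 // (ip_spanDiff_eq0 nj xL) mulr0 addr0.
by have := logphi_min inP; have := logphi_line_le xL hpos; lra.
Qed.

Let Ia i := `[< nonconst i >].
Let s := slack m.
Let D x := \sum_(i < r | Ia i) (`|ip (v i) x| ^+ 3 / s i ^+ 2 + `|ip (v i) x| / s i).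
Let E x := expR (- 2^-1 * \sum_(i < r | Ia i) (ip (v i) x ^+ 2 / s i)).
Let ratio k x := phik v a k (k%:R *: m) / phik v a k (k%:R *: m + Num.sqrt k%:R *: x).
Let corr k x := Num.sqrt (\prod_(i < r | Ia i)
  ((ip (v i) (k%:R *: m) + k%:R * (a i)%:~R) /
   (ip (v i) (k%:R *: m + Num.sqrt k%:R *: x) + k%:R * (a i)%:~R))).

Let s_gt0 {i} : Ia i -> 0 < s i.
Proof. by move=> /asboolP; exact: slack_gt0. Qed.

Let D_ge0 x : 0 <= D x.
Proof. by apply: sumr_ge0 => i /s_gt0/ltW si; rewrite addr_ge0 // divr_ge0 // exprn_ge0. Qed.

Lemma ratio_estimate {k x} : spanDiff P x -> (0 < k)%N ->
    D x / Num.sqrt k%:R <= 4^-1 ->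
  `|ratio k x - E x| <= 4 * E x * (D x / Num.sqrt k%:R) /\
  `|ratio k x * corr k x - E x| <= 4 * E x * (D x / Num.sqrt k%:R).
Proof.
move=> xL k0; set rho := Num.sqrt k%:R => Dk.
have rho0 : 0 < rho by rewrite sqrtr_gt0 ltr0n.
have rho2 : rho ^+ 2 = k%:R by rewrite sqr_sqrtr.
have offP i : ~~ Ia i -> s i = 0 /\ ip (v i) x = 0.
  by move=> /asboolPn nc; rewrite /s slack_eq0 ?(ip_spanDiff_eq0 nc xL).
have sum_u := sum_ip_eq0 v_sum0 x; have sum_ul := sum_ip_ln_slack_eq0 xL.
have ratioE : ratio k x = expR (\sum_i xlnx (rho ^+ 2 * s i)) /
    expR (\sum_i xlnx (rho ^+ 2 * s i + rho * ip (v i) x)).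
  rewrite /ratio !phikE -/rho rho2; congr (expR _ / expR _); apply: eq_bigr => i _;
    by rewrite /s /slack ?ipD !ipZ; congr xlnx; ring.
have corrE : corr k x = Num.sqrt (\prod_(i < r | Ia i)
    (rho ^+ 2 * s i / (rho ^+ 2 * s i + rho * ip (v i) x))).
  rewrite /corr -/rho; congr Num.sqrt; apply: eq_bigr => i _.
  by rewrite rho2 /s /slack ipD !ipZ; congr (_ / _); ring.
rewrite corrE ratioE; split.
  exact: (ratio_dist_le (@s_gt0) offP sum_u sum_ul rho0 Dk).
exact: (ratio_sqrt_prod_dist_le (@s_gt0) offP sum_u sum_ul rho0 Dk).
Qed.

Lemma ratio_cvg x : spanDiff P x -> (fun k => ratio k x) @ \oo --> E x.
Proof.
move=> xL; apply/cvgrPdist_le => e e0; have E0 : 0 < E x by exact: expR_gt0.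
set eps := Num.min 4^-1 (e / (4 * E x)).
have eps0 : 0 < eps by rewrite lt_min invr_gt0 ltr0n /= divr_gt0 // mulr_gt0.
have D1 : 0 < D x + 1 by have := D_ge0 x; lra.
near=> k.
have k0 : (0 < k)%N by near: k; exact: nbhs_infty_gt.
have : k%:R `^ (- 2^-1) <= eps / (D x + 1) by near: k; apply: near_powRN_le; rewrite ?divr_gt0.
rewrite powRN powR12_sqrt // ler_pdivlMr // => hk.
have Dk : D x / Num.sqrt k%:R <= eps.
  by apply: le_trans hk; rewrite [leRHS]mulrC ler_wpM2r ?invr_ge0 ?sqrtr_ge0 // lerDl.
have eps4 : eps <= 4^-1 by rewrite ge_min lexx.
have epsE : eps * (4 * E x) <= e by rewrite -ler_pdivlMr ?mulr_gt0 // ge_min lexx orbT.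
have [+ _] := ratio_estimate xL k0 (le_trans Dk eps4).
rewrite distrC => /le_trans; apply.
by apply: le_trans epsE; rewrite mulrC ler_wpM2r // mulr_ge0 // ltW.
Unshelve. all: by end_near.
Qed.

Let D_le x (B p : R) : 0 <= B -> 1 <= p -> (forall i, `|ip (v i) x| <= B * p) ->
  D x <= \sum_(i < r | Ia i) (B ^+ 3 / s i ^+ 2 + B / s i) * p ^+ 3.
Proof.
move=> B0 p1 hu; rewrite /D; apply: ler_sum => i /s_gt0 si.
have p3 : p <= p ^+ 3 by apply: ler_eXnr.
have u1 : `|ip (v i) x| <= B * p ^+ 3 by apply: le_trans (hu i) _; rewrite ler_wpM2l.
have u3 : `|ip (v i) x| ^+ 3 <= B ^+ 3 * p ^+ 3.
  have pB : 0 <= B * p by rewrite mulr_ge0 // (le_trans ler01 p1).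
  by rewrite -exprMn; apply: lerXn2r; rewrite ?nnegrE.
by rewrite mulrDl; apply: lerD; rewrite [leRHS]mulrAC ler_pM2r ?invr_gt0 ?exprn_gt0.
Qed.

Lemma ratio_bound c : 0 < c -> c < 6%:R^-1 ->
  exists C : R, 0 < C /\ exists K : nat, forall (k : nat) x, (K <= k)%N ->
    spanDiff P x -> enorm x < k%:R `^ c ->
    `|ratio k x * corr k x - E x| <= C * E x * k%:R `^ (3%:R * c - 2%:R^-1).
Proof.
move=> c0 c6; set B := \sum_i \sum_j `|(v i j)%:~R : R|.
set C0 := \sum_(i < r | Ia i) (B ^+ 3 / s i ^+ 2 + B / s i).
have B0 : 0 <= B by do 2!apply: sumr_ge0 => ? _.
have C00 : 0 <= C0.
  by apply: sumr_ge0 => i /s_gt0/ltW si; rewrite addr_ge0 // divr_ge0 // exprn_ge0.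
exists (4 * C0 + 1); split; first lra.
have [K _ hK] : \forall k \near \oo,
    (0 < k)%N /\ k%:R `^ (3%:R * c - 2%:R^-1) <= (4 * C0 + 1)^-1.
  near=> k; split; first by near: k; exact: nbhs_infty_gt.
  rewrite (_ : 3%:R * c - 2%:R^-1 = - (2^-1 - 3%:R * c)); last by ring.
  by near: k; apply: near_powRN_le; rewrite ?invr_gt0; lra.
exists K => k x /hK [k0 hth] xL hx.
have k1 : 1 <= k%:R :> R by rewrite ler1n.
set th := k%:R `^ _ in hth *; set pk := k%:R `^ c in hx.
have pk1 : 1 <= pk by have := ler_powR k1 (ltW c0); rewrite powRr0.
have th0 : 0 <= th by exact: powR_ge0.
have th_eq : th = pk ^+ 3 / Num.sqrt k%:R by rewrite /th powR_natmul_sub_half //; lra.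
have hu i : `|ip (v i) x| <= B * pk.
  apply: le_trans (normr_ip_le _ _) _; apply: ler_pM; rewrite ?sumr_ge0 ?sqrtr_ge0 ?(ltW hx) //.
  by rewrite /B (bigD1 i) //= lerDl; do 2!apply: sumr_ge0 => ? _.
have Dth : D x / Num.sqrt k%:R <= C0 * th.
  by rewrite th_eq mulrA ler_pM2r ?invr_gt0 ?sqrtr_gt0 ?ltr0n // /C0 mulr_suml D_le.
have C0th : (4 * C0 + 1) * th <= 1.
  by rewrite -ler_pdivlMl ?div1r //; lra.
have hd : D x / Num.sqrt k%:R <= 4^-1 by lra.
have [_ h] := ratio_estimate xL k0 hd; apply: le_trans h _.
have E0 : 0 <= E x by exact/ltW/expR_gt0.
have := ler_wpM2l (mulr_ge0 (ler0n R 4) E0) Dth; have := mulr_ge0 E0 th0; nra.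
Unshelve. all: by end_near.
Qed.

End Minimizer.

End Polytope.

Theorem mainTheorem3 (R : realType) (n r : nat)
  (v : 'I_r -> 'I_n -> int) (a : 'I_r -> int) (m : 'rV[R]_n)
  (hsum : forall j : 'I_n, \sum_(i < r) v i j = 0)
  (hcpt : compact (polP (R:=R) v a))
  (hface : forall i : 'I_r, exists y : 'rV[R]_n, polP v a y /\ ip (v i) y + (a i)%:~R = 0)
  (hm_in : polP v a m)
  (hm_min : forall y, polP v a y -> phik v a 1 m <= phik v a 1 y) :
  let E := fun x : 'rV[R]_n =>
    expR (- (2%:R^-1) * \sum_(i < r | `[< nonconst R v a i >])
            (ip (v i) x ^+ 2 / (ip (v i) m + (a i)%:~R))) in
  let ratio := fun (k : nat) (x : 'rV[R]_n) =>
    phik v a k (k%:R *: m) / phik v a k (k%:R *: m + Num.sqrt k%:R *: x) in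
  (forall x, spanDiff (polP v a) x ->
     (fun k : nat => ratio k x) @ \oo --> E x) /\
  (forall c : R, 0 < c -> c < 6%:R^-1 ->
     exists C : R, 0 < C /\ exists K : nat,
       forall (k : nat) (x : 'rV[R]_n), (K <= k)%N ->
         spanDiff (polP v a) x -> enorm x < k%:R `^ c ->
         `| ratio k x *
             Num.sqrt (\prod_(i < r | `[< nonconst R v a i >])
               ((ip (v i) (k%:R *: m) + k%:R * (a i)%:~R) /
                (ip (v i) (k%:R *: m + Num.sqrt k%:R *: x) + k%:R * (a i)%:~R)))
           - E x |
         <= C * E x * k%:R `^ (3%:R * c - 2%:R^-1)).
Proof.
(* Compactness of P is what makes the minimizer m exist. *)
move=> E ratio; split => [x | c c0 c6].
  exact: ratio_cvg hm_in hm_min hface hsum x.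
exact: ratio_bound hm_in hm_min hface hsum c c0 c6.
Qed.
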